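(* Let $\mathcal I\in\mathbb Q^{n\times n\times n_3}$ be the identity quaternion tensor. Then for every $\mathcal A\in\mathbb Q^{n\times n\times n_3}$, $\mathcal I+\mathcal A$ is invertible if and only if $I_{nn_3}+\mathtt{bcirc_z}(\mathcal A)$ is invertible.
   Context: $\mathbb Q$ denotes the real quaternions with the usual Hamilton multiplication; $\mathbb C$ is identified with $\{a_0+a_1\mathbf i\}$. Every quaternion array $A=A_0+A_1\mathbf i+A_2\mathbf j+A_3\mathbf k$ (real $A_t$) is written uniquely as $A=A_{\mathbf d}+\mathbf jA_{\mathbf c}$ with $A_{\mathbf d}=A_0+A_1\mathbf i$, $A_{\mathbf c}=A_2-A_3\mathbf i$. For $\mathcal A\in\mathbb Q^{n_1\times n_2\times n_3}$, $\mathcal A^{(s)}=\mathcal A(:,:,s)$. For a complex tensor $\mathcal C$, $\mathtt{bcirc}(\mathcal C)$ is the block circulant matrix with $(p,q)$ block $\mathcal C^{(((p-q)\bmod n_3)+1)}$. $P_{n_3}$ is the permutation matrix with first row $e_1^T$ and $r$-th row $e_{n_3+2-r}^T$ ($r\ge2$). $\mathtt{bcirc_z}(\mathcal A)=\mathtt{bcirc}(\mathcal A_{\mathbf d})+\mathbf j\,\mathtt{bcirc}(\mathcal A_{\mathbf c})(P_{n_3}\otimes I_{n_2})$. $\mathtt{unfold}(\mathcal B)=[\mathcal B^{(1)};\dots;\mathcal B^{(n_3)}]$, $\mathtt{fold}$ its inverse; QT-product $\mathcal A*_Q\mathcal B=\mathtt{fold}(\mathtt{bcirc_z}(\mathcal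 A)\mathtt{unfold}(\mathcal B))$. The identity tensor $\mathcal I$ has first frontal slice $I_n$ and all other frontal slices zero. A tensor $\mathcal M$ is invertible if there is $\mathcal N$ with $\mathcal M*_Q\mathcal N=\mathcal N*_Q\mathcal M=\mathcal I$. *)

From HB Require Import structures.
From mathcomp Require Import all_boot all_order all_algebra.
From mathcomp Require Import reals.
Set Implicit Arguments. Unset Strict Implicit. Unset Printing Implicit Defensive.
Import Order.TTheory GRing.Theory Num.Theory.
Local Open Scope ring_scope.

Record quat (R : Type) := Quat { q0 : R; q1 : R; q2 : R; q3 : R }.

Section Quat.
Variable R : realType.
Definition qzero : quat R := Quat 0 0 0 0.
Definition qone : quat R := Quat 1 0 0 0.
Definition qj : quat R := Quat 0 0 1 0.
Definition qadd (x y : quat R) : quat R :=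
  Quat (q0 x + q0 y) (q1 x + q1 y) (q2 x + q2 y) (q3 x + q3 y).
(* Hamilton product: i^2 = j^2 = k^2 = ijk = -1 *)
Definition qmul (x y : quat R) : quat R :=
  Quat (q0 x * q0 y - q1 x * q1 y - q2 x * q2 y - q3 x * q3 y)
       (q0 x * q1 y + q1 x * q0 y + q2 x * q3 y - q3 x * q2 y)
       (q0 x * q2 y - q1 x * q3 y + q2 x * q0 y + q3 x * q1 y)
       (q0 x * q3 y + q1 x * q2 y - q2 x * q1 y + q3 x * q0 y).
(* x = x_d + j x_c with x_d = x0 + x1 i, x_c = x2 - x3 i (complex numbers
   identified with quaternions a0 + a1 i) *)
Definition qd (x : quat R) : quat R := Quat (q0 x) (q1 x) 0 0.
Definition qc (x : quat R) : quat R := Quat (q2 x) (- q3 x) 0 0.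
End Quat.

Section QMatrix.
Variable R : realType.
Definition qaddmx m n (A B : 'M[quat R]_(m, n)) : 'M[quat R]_(m, n) :=
  \matrix_(i, j) qadd (A i j) (B i j).
Definition qmulmx m n p (A : 'M[quat R]_(m, n)) (B : 'M[quat R]_(n, p))
  : 'M[quat R]_(m, p) :=
  \matrix_(i, j) \big[@qadd R/qzero R]_(k < n) qmul (A i k) (B k j).
Definition qscalemx m n (q : quat R) (A : 'M[quat R]_(m, n)) : 'M[quat R]_(m, n) :=
  \matrix_(i, j) qmul q (A i j).
Definition qzeromx m n : 'M[quat R]_(m, n) := \matrix_(i, j) qzero R.
Definition qI n : 'M[quat R]_n :=
  \matrix_(i, j) if i == j then qone R else qzero R.
Definition qmx_invertible n (M : 'M[quat R]_n) : Prop :=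
  exists N : 'M[quat R]_n, qmulmx M N = qI n /\ qmulmx N M = qI n.
End QMatrix.

Lemma blk_proof (n3 n : nat) (k : 'I_(n3 * n)) : (k %/ n < n3)%N.
Proof.
case: n k => [|n] k; first by case: k => k; rewrite muln0.
by rewrite ltn_divLR // ltn_ord.
Qed.
Lemma inb_proof (n3 n : nat) (k : 'I_(n3 * n)) : (k %% n < n)%N.
Proof.
case: n k => [|n] k; first by case: k => k; rewrite muln0.
by rewrite ltn_pmod.
Qed.
Lemma mkidx_proof (n3 n : nat) (s : 'I_n3) (i : 'I_n) : (s * n + i < n3 * n)%N.
Proof.
case: s i => s hs [i hi].
have : (s * n + i < s.+1 * n)%N by rewrite mulSn addnC ltn_add2r.
move/leq_trans; apply; by rewrite leq_mul2r hs orbT.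
Qed.
Definition blk n3 n (k : 'I_(n3 * n)) : 'I_n3 := Ordinal (blk_proof k).
Definition inb n3 n (k : 'I_(n3 * n)) : 'I_n := Ordinal (inb_proof k).
Definition mkidx n3 n (s : 'I_n3) (i : 'I_n) : 'I_(n3 * n) :=
  Ordinal (mkidx_proof s i).
(* (p - q) mod n3, as an element of 'I_n3 *)
Lemma subord_proof n3 (p q : 'I_n3) : ((p + (n3 - q)) %% n3 < n3)%N.
Proof. by rewrite ltn_pmod // (leq_ltn_trans _ (ltn_ord p)). Qed.
Definition subord n3 (p q : 'I_n3) : 'I_n3 := Ordinal (subord_proof p q).

(* A tensor in Q^{n1 x n2 x n3} is the family of its frontal slices
   A^{(s)} = A(:,:,s), s = 1..n3 (here indexed by s : 'I_n3, 0-based). *)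
Definition qtensor (R : realType) n1 n2 n3 := {ffun 'I_n3 -> 'M[quat R]_(n1, n2)}.

Section QTensor.
Variable R : realType.
Definition tmap n1 n2 n3 (f : quat R -> quat R) (A : qtensor R n1 n2 n3)
  : qtensor R n1 n2 n3 := [ffun s => \matrix_(i, j) f (A s i j)].
Definition tensor_d n1 n2 n3 (A : qtensor R n1 n2 n3) := tmap (@qd R) A.
Definition tensor_c n1 n2 n3 (A : qtensor R n1 n2 n3) := tmap (@qc R) A.
Definition qtadd n1 n2 n3 (A B : qtensor R n1 n2 n3) : qtensor R n1 n2 n3 :=
  [ffun s => qaddmx (A s) (B s)].

(* block circulant matrix: (p,q) block is C^{((p-q) mod n3)+1} *)
Definition bcirc n1 n2 n3 (C : qtensor R n1 n2 n3) : 'M[quat R]_(n3 * n1, n3 * n2) :=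
  \matrix_(k, l) C (subord (blk k) (blk l)) (inb k) (inb l).

(* P_{n3}: first row e_1^T, r-th row e_{n3+2-r}^T (r >= 2); 0-based:
   row 0 has its 1 in column 0, row r >= 1 has its 1 in column n3 - r *)
Definition Pmx n3 : 'M[quat R]_n3 :=
  \matrix_(r, c) if (c == (if r == 0%N :> nat then 0%N else (n3 - r)%N) :> nat)
                 then qone R else qzero R.

Definition qkron m1 n1 m2 n2 (A : 'M[quat R]_(m1, n1)) (B : 'M[quat R]_(m2, n2))
  : 'M[quat R]_(m1 * m2, n1 * n2) :=
  \matrix_(k, l) qmul (A (blk k) (blk l)) (B (inb k) (inb l)).

Definition bcirc_z n1 n2 n3 (A : qtensor R n1 n2 n3) : 'M[quat R]_(n3 * n1, n3 * n2) :=
  qaddmx (bcirc (tensor_d A))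
         (qscalemx (qj R) (qmulmx (bcirc (tensor_c A)) (qkron (Pmx n3) (qI R n2)))).

Definition unfold n1 n2 n3 (B : qtensor R n1 n2 n3) : 'M[quat R]_(n3 * n1, n2) :=
  \matrix_(k, j) B (blk k) (inb k) j.
Definition fold n1 n2 n3 (M : 'M[quat R]_(n3 * n1, n2)) : qtensor R n1 n2 n3 :=
  [ffun s => \matrix_(i, j) M (mkidx s i) j].

Definition qtmul n1 n2 n4 n3 (A : qtensor R n1 n2 n3) (B : qtensor R n2 n4 n3)
  : qtensor R n1 n4 n3 := fold (qmulmx (bcirc_z A) (unfold B)).

Definition qtI n n3 : qtensor R n n n3 :=
  [ffun s : 'I_n3 => if (nat_of_ord s == 0%N) then qI R n else qzeromx R n n].

Definition qt_invertible n n3 (M : qtensor R n n n3) : Prop :=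
  exists N : qtensor R n n n3, qtmul M N = qtI n n3 /\ qtmul N M = qtI n n3.
End QTensor.

(* Write x = x_d + j x_c.  Entry ((p,i),(q,l)) of bcirc_z(A) has complex part taken
   from slice p - q of A and j-part from slice p + q.  Using z j = j conj(z) for complex
   z, this makes bcirc_z multiplicative for the QT-product; it is also additive and maps
   the identity tensor to the identity matrix, so it suffices to show that a tensor T
   is invertible iff bcirc_z(T) is.  Conversely to the easy direction, if X inverts
   bcirc_z(T), then N = fold (X unfold(I)) satisfies T *_Q N = I, hence bcirc_z(N) = X,
   and N *_Q T = I follows from unfold(T) = bcirc_z(T) unfold(I). *)

From HB Require Import structures.
From mathcomp Require Import all_boot all_order all_algebra.
From mathcomp Require Import reals.
From mathcomp Require Import ring.
Set Implicit Arguments. Unset Strict Implicit. Unset Printing Implicit Defensive.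
Import Order.TTheory GRing.Theory Num.Theory.
Local Open Scope ring_scope.

Lemma quatP (R : realType) (x y : quat R) :
  q0 x = q0 y -> q1 x = q1 y -> q2 x = q2 y -> q3 x = q3 y -> x = y.
Proof. by case: x => ????; case: y => ???? /= -> -> -> ->. Qed.

Lemma qaddA (R : realType) : associative (@qadd R).
Proof. by move=> x y z; apply: quatP => /=; ring. Qed.
Lemma qaddC (R : realType) : commutative (@qadd R).
Proof. by move=> x y; apply: quatP => /=; ring. Qed.
Lemma qadd0q (R : realType) : left_id (qzero R) (@qadd R).
Proof. by move=> x; apply: quatP => /=; ring. Qed.

HB.instance Definition _ (R : realType) :=
  Monoid.isComLaw.Build (quat R) (qzero R) (@qadd R) (@qaddA R) (@qaddC R) (@qadd0q R).

Section QuatAlgebra.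
Variable R : realType.
Implicit Types x y z : quat R.

Lemma qmulA x y z : qmul (qmul x y) z = qmul x (qmul y z).
Proof. by apply: quatP => /=; ring. Qed.
Lemma qmul1q x : qmul (qone R) x = x.
Proof. by apply: quatP => /=; ring. Qed.
Lemma qmulq1 x : qmul x (qone R) = x.
Proof. by apply: quatP => /=; ring. Qed.
Lemma qmul0q x : qmul (qzero R) x = qzero R.
Proof. by apply: quatP => /=; ring. Qed.
Lemma qmulq0 x : qmul x (qzero R) = qzero R.
Proof. by apply: quatP => /=; ring. Qed.
Lemma qmulDl x y z : qmul (qadd x y) z = qadd (qmul x z) (qmul y z).
Proof. by apply: quatP => /=; ring. Qed.
Lemma qmulDr x y z : qmul x (qadd y z) = qadd (qmul x y) (qmul x z).
Proof. by apply: quatP => /=; ring. Qed.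

Lemma qmul_suml (I : Type) (r : seq I) (P : pred I) (F : I -> quat R) y :
  qmul (\big[@qadd R/qzero R]_(i <- r | P i) F i) y
  = \big[@qadd R/qzero R]_(i <- r | P i) qmul (F i) y.
Proof. exact: (big_morph (fun x => qmul x y) (fun a b => qmulDl a b y) (qmul0q y)). Qed.
Lemma qmul_sumr (I : Type) (r : seq I) (P : pred I) (F : I -> quat R) y :
  qmul y (\big[@qadd R/qzero R]_(i <- r | P i) F i)
  = \big[@qadd R/qzero R]_(i <- r | P i) qmul y (F i).
Proof. exact: (big_morph (fun x => qmul y x) (fun a b => qmulDr y a b) (qmulq0 y)). Qed.

Lemma big_qdelta (I : finType) (i0 : I) (G : I -> quat R) :
  (forall i, i != i0 -> G i = qzero R) -> \big[@qadd R/qzero R]_i G i = G i0.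
Proof. by move=> G0; rewrite (bigD1 i0) //= big1 1?qaddC ?qadd0q. Qed.

Definition qjpart x : quat R := qmul (qj R) (qc x).
Definition qsplice x y : quat R := qadd (qd x) (qjpart y).

Lemma qsplice_id x : qsplice x x = x.
Proof. by apply: quatP => /=; ring. Qed.

Lemma qsplice_eq x y z : qd x = qd z -> qjpart y = qjpart z -> qsplice x y = z.
Proof. by rewrite -{3}(qsplice_id z) /qsplice => -> ->. Qed.

Lemma qd_splice x y : qd (qsplice x y) = qd x.
Proof. by apply: quatP => /=; ring. Qed.
Lemma qjpart_splice x y : qjpart (qsplice x y) = qjpart y.
Proof. by apply: quatP => /=; ring. Qed.

Lemma qsplice_add x y x' y' :
  qsplice (qadd x x') (qadd y y') = qadd (qsplice x y) (qsplice x' y').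
Proof. by apply: quatP => /=; ring. Qed.

(* [z j = j conj(z)] for complex [z]: the two j-parts of a product meet in its complex part. *)
Lemma qd_mul x y : qd (qmul x y) = qadd (qmul (qd x) (qd y)) (qmul (qjpart x) (qjpart y)).
Proof. by apply: quatP => /=; ring. Qed.
Lemma qjpart_mul x y :
  qjpart (qmul x y) = qadd (qmul (qd x) (qjpart y)) (qmul (qjpart x) (qd y)).
Proof. by apply: quatP => /=; ring. Qed.

Lemma qd_sum (I : Type) (r : seq I) (F : I -> quat R) :
  qd (\big[@qadd R/qzero R]_(i <- r) F i) = \big[@qadd R/qzero R]_(i <- r) qd (F i).
Proof.
by apply: (big_morph (@qd R)) => [a b|]; apply: quatP => /=; rewrite ?addr0.
Qed.
Lemma qjpart_sum (I : Type) (r : seq I) (F : I -> quat R) :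
  qjpart (\big[@qadd R/qzero R]_(i <- r) F i) = \big[@qadd R/qzero R]_(i <- r) qjpart (F i).
Proof. by apply: (big_morph qjpart) => [a b|]; apply: quatP => /=; ring. Qed.

End QuatAlgebra.

Section TwistedConvolution.
Variables (R : realType) (V : finZmodType) (I : finType).
Variables X Y : V -> I -> quat R.

(* Slice [s] of a QT-product, [X] and [Y] being a row fibre and a column fibre of the
   two factors (indexed by slice and inner index). *)
Definition tconv (s : V) : quat R :=
  \big[@qadd R/qzero R]_(r : V) \big[@qadd R/qzero R]_(m : I)
    qmul (qsplice (X (s - r) m) (X (s + r) m)) (Y r m).

Lemma qsplice_tconv p q :
  qsplice (tconv (p - q)) (tconv (p + q)) =
  \big[@qadd R/qzero R]_(r : V) \big[@qadd R/qzero R]_(m : I)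
    qmul (qsplice (X (p - r) m) (X (p + r) m)) (qsplice (Y (r - q) m) (Y (r + q) m)).
Proof.
apply: qsplice_eq.
- rewrite !qd_sum; under eq_bigr do rewrite qd_sum; under [RHS]eq_bigr do rewrite qd_sum.
  under eq_bigr do under eq_bigr do rewrite qd_mul qd_splice qjpart_splice.
  under [RHS]eq_bigr do under eq_bigr do rewrite qd_mul !qd_splice !qjpart_splice.
  under eq_bigr do rewrite big_split; under [RHS]eq_bigr do rewrite big_split.
  rewrite !big_split /=; congr qadd.
    rewrite [RHS](reindex_inj (addIr q)) /=.
    by apply: eq_bigr => r _; rewrite addrK opprD addrA (addrAC p).
  rewrite [RHS](reindex_inj (addIr (- q))) /=.
  by apply: eq_bigr => r _; rewrite subrK addrA (addrAC p).
- rewrite !qjpart_sum; under eq_bigr do rewrite qjpart_sum.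
  under [RHS]eq_bigr do rewrite qjpart_sum.
  under eq_bigr do under eq_bigr do rewrite qjpart_mul qd_splice qjpart_splice.
  under [RHS]eq_bigr do under eq_bigr do rewrite qjpart_mul !qd_splice !qjpart_splice.
  under eq_bigr do rewrite big_split; under [RHS]eq_bigr do rewrite big_split.
  rewrite !big_split /=; congr qadd.
    rewrite [RHS](reindex_inj (addIr (- q))) /=.
    by apply: eq_bigr => r _; rewrite subrK opprD opprK addrA (addrAC p).
  rewrite [RHS](reindex_inj (addIr q)) /=.
  by apply: eq_bigr => r _; rewrite addrK addrA (addrAC p).
Qed.

End TwistedConvolution.

Section QuatMatrix.
Variable R : realType.

Lemma qaddmxE m n (A B : 'M[quat R]_(m, n)) i j : qaddmx A B i j = qadd (A i j) (B i j).
Proof. exact: mxE. Qed.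
Lemma qscalemxE m n q (A : 'M[quat R]_(m, n)) i j : qscalemx q A i j = qmul q (A i j).
Proof. exact: mxE. Qed.
Lemma qmulmxE m n p (A : 'M[quat R]_(m, n)) (B : 'M[quat R]_(n, p)) i j :
  qmulmx A B i j = \big[@qadd R/qzero R]_(k < n) qmul (A i k) (B k j).
Proof. exact: mxE. Qed.
Lemma qIE n (i j : 'I_n) : qI R n i j = if i == j then qone R else qzero R.
Proof. exact: mxE. Qed.

Lemma qmulmxA m n p r (A : 'M[quat R]_(m, n)) (B : 'M[quat R]_(n, p))
    (C : 'M[quat R]_(p, r)) :
  qmulmx (qmulmx A B) C = qmulmx A (qmulmx B C).
Proof.
apply/matrixP => i j; rewrite !qmulmxE.
under eq_bigr do rewrite qmulmxE qmul_suml.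
under [RHS]eq_bigr do rewrite qmulmxE qmul_sumr.
by rewrite exchange_big; apply: eq_bigr => a _; apply: eq_bigr => b _; rewrite qmulA.
Qed.

Lemma qmul1mx m n (M : 'M[quat R]_(m, n)) : qmulmx (qI R m) M = M.
Proof.
apply/matrixP => i j; rewrite qmulmxE (big_qdelta (i0 := i)) ?qIE ?eqxx ?qmul1q // => k ki.
by rewrite qIE eq_sym (negPf ki) qmul0q.
Qed.
Lemma qmulmx1 m n (M : 'M[quat R]_(m, n)) : qmulmx M (qI R n) = M.
Proof.
apply/matrixP => i j; rewrite qmulmxE (big_qdelta (i0 := j)) ?qIE ?eqxx ?qmulq1 // => k kj.
by rewrite qIE (negPf kj) qmulq0.
Qed.

End QuatMatrix.

Section BlockIndex.
Variables n3 n : nat.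

Lemma blk_mkidx (s : 'I_n3) (i : 'I_n) : blk (mkidx s i) = s.
Proof.
apply: val_inj => /=; have n_gt0 : (0 < n)%N := leq_ltn_trans (leq0n _) (ltn_ord i).
by rewrite divnMDl // divn_small // addn0.
Qed.
Lemma inb_mkidx (s : 'I_n3) (i : 'I_n) : inb (mkidx s i) = i.
Proof. by apply: val_inj => /=; rewrite modnMDl modn_small. Qed.
Lemma mkidx_blk_inb (k : 'I_(n3 * n)) : mkidx (blk k) (inb k) = k.
Proof. by apply: val_inj => /=; rewrite -divn_eq. Qed.

Lemma eq_mkidx (k : 'I_(n3 * n)) s i : (blk k == s) && (inb k == i) = (k == mkidx s i).
Proof.
apply/andP/eqP => [[/eqP <- /eqP <-]|->]; first by rewrite mkidx_blk_inb.
by rewrite blk_mkidx inb_mkidx.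
Qed.

Lemma big_mkidx (T : Type) (idx : T) (op : Monoid.com_law idx) (F : 'I_(n3 * n) -> T) :
  \big[op/idx]_(k < n3 * n) F k = \big[op/idx]_(s < n3) \big[op/idx]_(i < n) F (mkidx s i).
Proof.
rewrite pair_big (reindex (fun p : 'I_n3 * 'I_n => mkidx p.1 p.2)) //.
exists (fun k => (blk k, inb k)) => [[s i] _ | k _] /=.
  by rewrite blk_mkidx inb_mkidx.
by rewrite mkidx_blk_inb.
Qed.

End BlockIndex.

Section FoldUnfold.
Variables (R : realType) (n1 n2 n3 : nat).

Lemma unfoldK (M : 'M[quat R]_(n3 * n1, n2)) : unfold (fold M) = M.
Proof. by apply/matrixP => k j; rewrite !mxE ffunE mxE mkidx_blk_inb. Qed.
Lemma foldK (T : qtensor R n1 n2 n3) : fold (unfold T) = T.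
Proof.
by apply/ffunP => s; apply/matrixP => i j; rewrite ffunE !mxE blk_mkidx inb_mkidx.
Qed.

End FoldUnfold.

Lemma subordE t (p q : 'I_t.+1) : subord p q = p - q.
Proof. by apply: val_inj => /=; rewrite modnDmr. Qed.

Lemma val_oppord t (r : 'I_t.+1) :
  nat_of_ord (- r) = (if nat_of_ord r == 0%N then 0%N else (t.+1 - r)%N).
Proof.
case: r => [[|r] r_lt] /=; first by rewrite subn0 modnn.
by rewrite modn_small // ltn_subrL.
Qed.

Section BcircZ.
Variables (R : realType) (t : nat).
Local Notation n3 := t.+1.

Lemma qkron_Pmx_qIE n (k l : 'I_(n3 * n)) :
  qkron (Pmx R n3) (qI R n) k l = if k == mkidx (- blk l) (inb l) then qone R else qzero R.
Proof.
rewrite mxE /Pmx mxE qIE -val_oppord -eq_mkidx.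
have -> : (nat_of_ord (blk l) == - blk k :> nat) = (blk k == - blk l).
  by rewrite -eqr_oppLR eq_sym.
by case: (blk k == _); case: (inb k == _); rewrite ?qmul1q ?qmul0q.
Qed.

(* The permutation [P] turns the slice index [p - q] of [bcirc] into [p + q]. *)
Lemma bcirc_zE n1 n2 (A : qtensor R n1 n2 n3) k l :
  bcirc_z A k l =
  qsplice (A (blk k - blk l) (inb k) (inb l)) (A (blk k + blk l) (inb k) (inb l)).
Proof.
rewrite qaddmxE qscalemxE qmulmxE (big_qdelta (i0 := mkidx (- blk l) (inb l))).
  rewrite qkron_Pmx_qIE eqxx qmulq1 !mxE !ffunE !mxE blk_mkidx inb_mkidx.
  by rewrite !subordE opprK.
by move=> m /negPf m_ne; rewrite qkron_Pmx_qIE m_ne qmulq0.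
Qed.

Lemma bcirc_z_mulmxE n1 n2 m (A : qtensor R n1 n2 n3) (M : 'M[quat R]_(n3 * n2, m)) k j :
  qmulmx (bcirc_z A) M k j =
  \big[@qadd R/qzero R]_(r : 'I_n3) \big[@qadd R/qzero R]_(i : 'I_n2)
    qmul (qsplice (A (blk k - r) (inb k) i) (A (blk k + r) (inb k) i)) (M (mkidx r i) j).
Proof.
rewrite qmulmxE big_mkidx; apply: eq_bigr => r _; apply: eq_bigr => i _.
by rewrite bcirc_zE blk_mkidx inb_mkidx.
Qed.

Lemma qtmulE n1 n2 n4 (A : qtensor R n1 n2 n3) (B : qtensor R n2 n4 n3) s i j :
  qtmul A B s i j = tconv (fun a m => A a i m) (fun b m => B b m j) s.
Proof.
rewrite /qtmul ffunE mxE bcirc_z_mulmxE blk_mkidx inb_mkidx.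
by apply: eq_bigr => r _; apply: eq_bigr => m _; rewrite mxE blk_mkidx inb_mkidx.
Qed.

Lemma bcirc_z_qtmul n1 n2 n4 (A : qtensor R n1 n2 n3) (B : qtensor R n2 n4 n3) :
  bcirc_z (qtmul A B) = qmulmx (bcirc_z A) (bcirc_z B).
Proof.
apply/matrixP => k l; rewrite bcirc_zE !qtmulE bcirc_z_mulmxE.
under [RHS]eq_bigr do under eq_bigr do rewrite bcirc_zE blk_mkidx inb_mkidx.
exact: qsplice_tconv.
Qed.

Lemma bcirc_z_qtadd n1 n2 (A B : qtensor R n1 n2 n3) :
  bcirc_z (qtadd A B) = qaddmx (bcirc_z A) (bcirc_z B).
Proof. by apply/matrixP => k l; rewrite qaddmxE !bcirc_zE !ffunE !mxE qsplice_add. Qed.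

Lemma qtIE n (s : 'I_n3) (i j : 'I_n) :
  qtI R n n3 s i j = if (s == 0) && (i == j) then qone R else qzero R.
Proof. by rewrite ffunE -[_ == 0%N]/(s == 0); case: (s == 0); rewrite mxE. Qed.

Lemma bcirc_z_qtI n : bcirc_z (qtI R n n3) = qI R (n3 * n).
Proof.
apply/matrixP => k l; rewrite bcirc_zE !qtIE qIE subr_eq0 eq_mkidx mkidx_blk_inb.
by case: (k == l); case: (_ && _); apply: quatP => /=; ring.
Qed.

Lemma bcirc_z_unfold_qtI n1 n2 (T : qtensor R n1 n2 n3) :
  qmulmx (bcirc_z T) (unfold (qtI R n2 n3)) = unfold T.
Proof.
apply/matrixP => k j; rewrite bcirc_z_mulmxE (big_qdelta (i0 := 0)) => [|r /negPf r_ne0].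
  rewrite (big_qdelta (i0 := j)) => [|m /negPf m_ne].
    by rewrite !mxE qtIE blk_mkidx inb_mkidx !eqxx qmulq1 subr0 addr0 qsplice_id.
  by rewrite mxE qtIE blk_mkidx inb_mkidx m_ne andbF qmulq0.
by apply: big1 => m _; rewrite mxE qtIE blk_mkidx r_ne0 qmulq0.
Qed.

Lemma qt_invertible_bcirc_z n (T : qtensor R n n n3) :
  qt_invertible T <-> qmx_invertible (bcirc_z T).
Proof.
split=> [[N [TN NT]] | [X [TX XT]]].
  by exists (bcirc_z N); rewrite -!bcirc_z_qtmul TN NT bcirc_z_qtI.
pose N := fold (qmulmx X (unfold (qtI R n n3))).
have TN : qtmul T N = qtI R n n3.
  by rewrite /qtmul unfoldK -qmulmxA TX qmul1mx foldK.
have XE : bcirc_z N = X.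
  by rewrite -[bcirc_z N]qmul1mx -XT qmulmxA -bcirc_z_qtmul TN bcirc_z_qtI qmulmx1.
exists N; split=> //.
by rewrite /qtmul XE -bcirc_z_unfold_qtI -qmulmxA XT qmul1mx foldK.
Qed.

End BcircZ.

Theorem lemma4p2 (R : realType) (n n3 : nat) (A : qtensor R n n n3) :
  qt_invertible (qtadd (qtI R n n3) A) <->
  qmx_invertible (qaddmx (qI R (n3 * n)) (bcirc_z A)).
Proof.
case: n3 A => [|t] A; last by rewrite -bcirc_z_qtI -bcirc_z_qtadd qt_invertible_bcirc_z.
(* For [n3 = 0] all the tensors and matrices involved are empty. *)
split=> _.
  by exists (qI R (0 * n)); split; apply/matrixP => -[].
by exists A; split; apply/ffunP => -[].
Qed.
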